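(* There exist constants $c,C>0$ such that for all integers $n\ge2$ and $k\in\mathbb{N}$ with $k\le n^{1/4}$, and all $z\in\mathbb{Z}^2$ with $\|z\|\ge5\sqrt n$, $$\Pr\big[R(n)\cap Q(z,k)\neq\emptyset\big]\le\frac{C}{\log n}\exp\Big(-c\frac{\|z\|^2}{n}\Big).$$
   Context: $S$ is simple symmetric random walk on $\mathbb{Z}^2$ started at $S(0)=0$ (law $\Pr$), $R(n)=\{S(0),\ldots,S(n)\}$. $\|\cdot\|$ is the Euclidean norm. For $z\in\mathbb{Z}^2$ and $k\in\mathbb{N}$, $Q(z,k)=\{z+(j,j'): -k\le j,j'\le k\}$ is the square of side length $2k+1$ centered at $z$. Logarithms are base $2$. *)

From Stdlib Require Import Reals ZArith List Lia Lra.
Import ListNotations.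
Open Scope R_scope.

Inductive dir : Type := East | West | North | South.

Definition step (d : dir) : Z * Z :=
  match d with
  | East => (1%Z, 0%Z) | West => ((-1)%Z, 0%Z)
  | North => (0%Z, 1%Z) | South => (0%Z, (-1)%Z)
  end.

Definition addZ2 (p q : Z * Z) : Z * Z := (fst p + fst q, snd p + snd q)%Z.

Fixpoint all_paths (n : nat) : list (list dir) :=
  match n with
  | O => [ [] ]
  | S m => flat_map (fun p => map (fun d => d :: p) [East; West; North; South])
                    (all_paths m)
  end.

Definition in_square (z : Z * Z) (k : nat) (x : Z * Z) : bool :=
  (Z.abs (fst x - fst z) <=? Z.of_nat k)%Z && (Z.abs (snd x - snd z) <=? Z.of_nat k)%Z.

(* Does the walk starting at position pos with steps ds visit Q(z,k),
   counting the starting position (so R(n) = {S(0),...,S(n)}). *)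
Fixpoint visits (z : Z * Z) (k : nat) (pos : Z * Z) (ds : list dir) : bool :=
  in_square z k pos ||
  match ds with
  | [] => false
  | d :: ds' => visits z k (addZ2 pos (step d)) ds'
  end.

(* Pr[R(n) ∩ Q(z,k) ≠ ∅] for SRW started at 0: the first n steps are
   uniform over the 4^n step sequences. *)
Definition hit_prob (n : nat) (z : Z * Z) (k : nat) : R :=
  INR (length (filter (visits z k (0%Z, 0%Z)) (all_paths n))) / 4 ^ n.

Definition normZ2 (z : Z * Z) : R := sqrt (IZR (fst z) ^ 2 + IZR (snd z) ^ 2).

Definition log2 (x : R) : R := ln x / ln 2.

From Stdlib Require Import Reals ZArith List Lia Lra.
Open Scope R_scope.

(* Proof by a first-hit/Green's-function comparison.  Put r = 2k+1 and let B
   be the box {|u - u(z)| <= r, |v - v(z)| <= r} in the rotated coordinates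
   u = x + y, v = x - y; it contains Q(z,k).  In these coordinates the planar
   walk is a pair of independent one-dimensional walks, so the occupation
   probabilities of B are products of two one-dimensional window
   probabilities. *)

Lemma exp_le_mono (x y : R) : x <= y -> exp x <= exp y.
Proof. intros [Hlt | ->]; [left; apply exp_increasing; exact Hlt | lra]. Qed.

Lemma Rdiv_nonneg (x y : R) : 0 <= x -> 0 < y -> 0 <= x / y.
Proof. intros Hx Hy. apply Rmult_le_pos; [exact Hx | left; apply Rinv_0_lt_compat, Hy]. Qed.

Lemma ln_le (a b : R) : 0 < a -> a <= b -> ln a <= ln b.
Proof. intros Ha [Hlt | ->]; [left; apply ln_increasing; assumption | lra]. Qed.

Lemma ln_1p_le (x : R) : 0 < x -> ln (1 + x) <= x.
Proof. intros Hx. rewrite <- (ln_exp x) at 2. apply ln_le; [lra | apply exp_ineq1_le]. Qed.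

Lemma exp_neg_le_inv (x : R) : 0 < x -> exp (- x) <= / x.
Proof.
  intros Hx. rewrite exp_Ropp. apply Rinv_le_contravar; [exact Hx |].
  pose proof (exp_ineq1_le x). lra.
Qed.

Definition hit_count (z : Z * Z) (k m : nat) (pos : Z * Z) : nat :=
  length (filter (visits z k pos) (all_paths m)).

Definition hit_prob_from (z : Z * Z) (k m : nat) (pos : Z * Z) : R :=
  INR (hit_count z k m pos) / 4 ^ m.

Definition nbr_sum (f : Z * Z -> R) (p : Z * Z) : R :=
  f (addZ2 p (step East)) + f (addZ2 p (step West))
  + f (addZ2 p (step North)) + f (addZ2 p (step South)).

Lemma all_paths_length (m : nat) : length (all_paths m) = (4 ^ m)%nat.
Proof.
  induction m as [|m IH]; simpl; auto.
  rewrite <- IH. clear IH. induction (all_paths m) as [|p ps IH]; simpl; auto.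
  rewrite IH. lia.
Qed.

Lemma hit_count_O (z : Z * Z) (k : nat) (pos : Z * Z) :
  hit_count z k 0 pos = if in_square z k pos then 1%nat else 0%nat.
Proof. unfold hit_count. simpl. destruct (in_square z k pos); reflexivity. Qed.

Lemma hit_count_inside (z : Z * Z) (k m : nat) (pos : Z * Z) :
  in_square z k pos = true -> hit_count z k (S m) pos = (4 ^ S m)%nat.
Proof.
  intros Hin. unfold hit_count. rewrite <- all_paths_length. simpl.
  induction (all_paths m) as [|p ps IH]; simpl; auto.
  rewrite Hin. simpl. rewrite IH. reflexivity.
Qed.

Lemma hit_count_outside (z : Z * Z) (k m : nat) (pos : Z * Z) :
  in_square z k pos = false ->
  hit_count z k (S m) pos =
    (hit_count z k m (addZ2 pos (step East)) + hit_count z k m (addZ2 pos (step West))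
     + hit_count z k m (addZ2 pos (step North))
     + hit_count z k m (addZ2 pos (step South)))%nat.
Proof.
  intros Hout. unfold hit_count. simpl.
  induction (all_paths m) as [|p ps IH]; simpl; auto.
  rewrite Hout. simpl in *.
  destruct (visits z k (addZ2 pos (1%Z, 0%Z)) p);
  destruct (visits z k (addZ2 pos ((-1)%Z, 0%Z)) p);
  destruct (visits z k (addZ2 pos (0%Z, 1%Z)) p);
  destruct (visits z k (addZ2 pos (0%Z, (-1)%Z)) p); simpl; rewrite IH; lia.
Qed.

Lemma hit_prob_from_step (z : Z * Z) (k m : nat) (pos : Z * Z) :
  in_square z k pos = false ->
  hit_prob_from z k (S m) pos = nbr_sum (hit_prob_from z k m) pos / 4.
Proof.
  intros Hout. unfold hit_prob_from, nbr_sum. rewrite hit_count_outside by exact Hout.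
  rewrite !plus_INR. simpl pow. field. apply pow_nonzero. lra.
Qed.

Lemma hit_prob_from_inside (z : Z * Z) (k m : nat) (pos : Z * Z) :
  in_square z k pos = true -> hit_prob_from z k m pos = 1.
Proof.
  intros Hin. unfold hit_prob_from. destruct m as [|m].
  - rewrite hit_count_O, Hin. simpl. field.
  - rewrite hit_count_inside by exact Hin. rewrite pow_INR. simpl INR.
    replace (1 + 1 + 1 + 1) with 4 by ring. field. apply pow_nonzero. lra.
Qed.

(* walk1 j a: probability that simple random walk on Z started at 0 is at a
   at time j, defined by the one-step recursion. *)
Fixpoint walk1 (j : nat) (a : Z) : R :=
  match j with
  | O => if Z.eq_dec a 0 then 1 else 0
  | S j' => (walk1 j' (a - 1) + walk1 j' (a + 1)) / 2
  end.

Lemma walk1_S (j : nat) (a : Z) : walk1 (S j) a = (walk1 j (a - 1) + walk1 j (a + 1)) / 2.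
Proof. reflexivity. Qed.

Lemma walk1_nonneg (j : nat) (a : Z) : 0 <= walk1 j a.
Proof.
  revert a. induction j as [|j IH]; intros a; simpl.
  - destruct (Z.eq_dec a 0); lra.
  - pose proof (IH (a - 1)%Z). pose proof (IH (a + 1)%Z). lra.
Qed.

Lemma walk1_sym (j : nat) (a : Z) : walk1 j (- a) = walk1 j a.
Proof.
  revert a. induction j as [|j IH]; intros a; simpl.
  - destruct (Z.eq_dec (- a) 0), (Z.eq_dec a 0); lra || lia.
  - replace (- a - 1)%Z with (- (a + 1))%Z by lia.
    replace (- a + 1)%Z with (- (a - 1))%Z by lia.
    rewrite !IH. lra.
Qed.

Lemma walk1_parity (j : nat) (a : Z) : Z.Odd (Z.of_nat j + a) -> walk1 j a = 0.
Proof.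
  revert a. induction j as [|j IH]; intros a [m Hm]; simpl.
  - destruct (Z.eq_dec a 0); [lia | reflexivity].
  - rewrite !IH; [lra | exists m; lia | exists (m - 1)%Z; lia].
Qed.

Lemma walk1_ratio (j : nat) (a : Z) :
  walk1 j (a + 2) * (INR j + IZR a + 2) = walk1 j a * (INR j - IZR a).
Proof.
  revert a. induction j as [|j IH]; intros a.
  - simpl. destruct (Z.eq_dec (a + 2) 0), (Z.eq_dec a 0); try lia.
    + replace a with (-2)%Z by lia. simpl. lra.
    + subst. simpl. lra.
    + lra.
  - rewrite !walk1_S, S_INR.
    pose proof (IH (a + 1)%Z) as H1. pose proof (IH (a - 1)%Z) as H2.
    replace (a + 1 + 2)%Z with (a + 2 + 1)%Z in H1 by lia.
    replace (a - 1 + 2)%Z with (a + 1)%Z in H2 by lia.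
    replace (a + 2 - 1)%Z with (a + 1)%Z by lia.
    rewrite plus_IZR in H1. rewrite minus_IZR in H2. simpl in H1, H2. nra.
Qed.

Lemma walk1_decr (j : nat) (a : Z) : (-1 <= a)%Z -> walk1 j (a + 2) <= walk1 j a.
Proof.
  intros Ha. pose proof (walk1_ratio j a). pose proof (walk1_nonneg j a).
  pose proof (walk1_nonneg j (a + 2)). pose proof (pos_INR j).
  apply IZR_le in Ha. simpl in Ha. nra.
Qed.

Lemma walk1_return_rec (m : nat) :
  walk1 (2 * S m) 0 * (2 * INR m + 2) = walk1 (2 * m) 0 * (2 * INR m + 1).
Proof.
  replace (2 * S m)%nat with (S (S (2 * m))) by lia.
  rewrite (walk1_S (S (2 * m))), !(walk1_S (2 * m)). simpl Z.add. simpl Z.sub.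
  change (-2)%Z with (- (2))%Z. rewrite walk1_sym.
  pose proof (walk1_ratio (2 * m) 0) as H.
  rewrite mult_INR in H. simpl (INR 2) in H. simpl Z.add in H. simpl IZR in H. nra.
Qed.

Lemma walk1_return_bounds (m : nat) :
  walk1 (2 * m) 0 ^ 2 * (3 * INR m + 1) <= 1 <= walk1 (2 * m) 0 ^ 2 * (4 * INR m + 1).
Proof.
  induction m as [|m [IHup IHlo]].
  - simpl. lra.
  - pose proof (walk1_return_rec m) as Hrec. rewrite S_INR.
    pose proof (pos_INR m). pose proof (walk1_nonneg (2 * m) 0).
    set (x := walk1 (2 * m) 0) in *. set (y := walk1 (2 * S m) 0) in *.
    set (t := INR m) in *.
    assert (Hsq : y ^ 2 * (2 * t + 2) ^ 2 = x ^ 2 * (2 * t + 1) ^ 2)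
      by (rewrite <- !Rpow_mult_distr, Hrec; reflexivity).
    assert (HD : 0 < (2 * t + 2) ^ 2) by nra.
    split; apply Rmult_le_reg_r with ((2 * t + 2) ^ 2); try exact HD.
    + replace (y ^ 2 * (3 * (t + 1) + 1) * (2 * t + 2) ^ 2)
        with (x ^ 2 * (2 * t + 1) ^ 2 * (3 * t + 4)) by (rewrite <- Hsq; ring).
      assert (0 <= x ^ 2) by nra. nra.
    + replace (y ^ 2 * (4 * (t + 1) + 1) * (2 * t + 2) ^ 2)
        with (x ^ 2 * (2 * t + 1) ^ 2 * (4 * t + 5)) by (rewrite <- Hsq; ring).
      assert (0 <= x ^ 2) by nra. nra.
Qed.

(* The mass at the two central sites {0, 1}; exactly one of them is reachable
   at any given time. *)
Definition central_mass (j : nat) : R := walk1 j 0 + walk1 j 1.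

Lemma central_mass_nonneg (j : nat) : 0 <= central_mass j.
Proof. unfold central_mass. pose proof (walk1_nonneg j 0). pose proof (walk1_nonneg j 1). lra. Qed.

Lemma central_mass_bound (j : nat) : central_mass j ^ 2 * (INR j + 1) <= 2.
Proof.
  unfold central_mass.
  destruct (Nat.Even_or_Odd j) as [[m Hm]|[m Hm]]; subst j.
  - rewrite (walk1_parity (2 * m) 1) by (exists (Z.of_nat m); lia).
    pose proof (walk1_return_bounds m) as [Hup _]. rewrite mult_INR. simpl (INR 2).
    pose proof (pos_INR m). pose proof (walk1_nonneg (2 * m) 0). nra.
  - rewrite (walk1_parity (2 * m + 1) 0) by (exists (Z.of_nat m); lia).
    replace (2 * m + 1)%nat with (S (2 * m)) by lia. rewrite walk1_S.
    pose proof (walk1_decr (2 * m) 0 ltac:(lia)) as Hdec. simpl Z.add in *. simpl Z.sub.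
    pose proof (walk1_return_bounds m) as [Hup _]. rewrite S_INR, mult_INR. simpl (INR 2).
    pose proof (pos_INR m). pose proof (walk1_nonneg (2 * m) 0).
    pose proof (walk1_nonneg (2 * m) 2).
    assert (((walk1 (2 * m) 0 + walk1 (2 * m) 2) / 2) ^ 2 <= walk1 (2 * m) 0 ^ 2) by nra. nra.
Qed.

Lemma walk1_gauss_step (j t : nat) :
  walk1 j (Z.of_nat t + 2) <= walk1 j (Z.of_nat t) * exp (- (INR t + 1) / (INR j + 1)).
Proof.
  pose proof (walk1_ratio j (Z.of_nat t)) as Hratio. rewrite <- INR_IZR_INZ in Hratio.
  set (y := walk1 j (Z.of_nat t + 2)) in *. set (Y := walk1 j (Z.of_nat t)) in *.
  assert (Hy : 0 <= y) by apply walk1_nonneg. assert (HY : 0 <= Y) by apply walk1_nonneg.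
  pose proof (pos_INR t). pose proof (pos_INR j).
  pose proof (exp_pos (- (INR t + 1) / (INR j + 1))).
  destruct (Rle_lt_dec (INR t) (INR j)) as [Hle | Hgt]; [| nra].
  apply Rle_trans with (Y * (1 - (INR t + 1) / (INR j + 1))).
  - apply Rmult_le_reg_r with (INR j + 1); [lra |].
    replace (Y * (1 - (INR t + 1) / (INR j + 1)) * (INR j + 1)) with (Y * (INR j - INR t))
      by (field; lra). nra.
  - apply Rmult_le_compat_l; [exact HY |].
    pose proof (exp_ineq1_le (- (INR t + 1) / (INR j + 1))). unfold Rdiv in *. lra.
Qed.

Lemma walk1_gauss_nat (j t : nat) :
  walk1 j (Z.of_nat t) <= central_mass j * exp (- (INR t ^ 2 - 1) / (4 * (INR j + 1))).
Proof.
  pose proof (walk1_nonneg j 0). pose proof (walk1_nonneg j 1). pose proof (pos_INR j).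
  unfold central_mass.
  enough (Hpair : forall s : nat,
    walk1 j (Z.of_nat s) <= (walk1 j 0 + walk1 j 1) * exp (- (INR s ^ 2 - 1) / (4 * (INR j + 1)))
    /\ walk1 j (Z.of_nat (S s))
       <= (walk1 j 0 + walk1 j 1) * exp (- (INR (S s) ^ 2 - 1) / (4 * (INR j + 1))))
    by exact (proj1 (Hpair t)).
  clear t. induction s as [|s [IH1 IH2]]; [split |].
  - simpl. apply Rle_trans with ((walk1 j 0 + walk1 j 1) * 1); [lra |].
    apply Rmult_le_compat_l; [lra |].
    pose proof (exp_ineq1_le (- (0 * (0 * 1) - 1) / (4 * (INR j + 1)))) as Hexp.
    assert (0 < - (0 * (0 * 1) - 1) / (4 * (INR j + 1))) by (apply Rdiv_lt_0_compat; lra).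
    lra.
  - simpl. replace (- (1 * (1 * 1) - 1) / (4 * (INR j + 1))) with 0 by (field; lra).
    rewrite exp_0. lra.
  - split; [exact IH2 |].
    replace (Z.of_nat (S (S s))) with (Z.of_nat s + 2)%Z by lia.
    eapply Rle_trans; [apply walk1_gauss_step |].
    eapply Rle_trans; [apply Rmult_le_compat_r; [left; apply exp_pos | apply IH1] |].
    rewrite Rmult_assoc, <- exp_plus. right. f_equal. f_equal.
    rewrite !S_INR. field. lra.
Qed.

Lemma walk1_gauss (j : nat) (a : Z) :
  walk1 j a <= central_mass j * exp (1 / 4) * exp (- IZR a ^ 2 / (4 * (INR j + 1))).
Proof.
  assert (Habs : walk1 j a = walk1 j (Z.of_nat (Z.abs_nat a))
                 /\ IZR a ^ 2 = INR (Z.abs_nat a) ^ 2).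
  { rewrite INR_IZR_INZ, Nat2Z.inj_abs_nat.
    destruct (Z_le_gt_dec 0 a).
    - rewrite Z.abs_eq by lia. auto.
    - rewrite Z.abs_neq by lia. rewrite walk1_sym. split; [reflexivity |].
      rewrite Ropp_Ropp_IZR. ring. }
  destruct Habs as [-> ->].
  eapply Rle_trans; [apply walk1_gauss_nat |].
  pose proof (central_mass_nonneg j). pose proof (pos_INR j).
  rewrite Rmult_assoc. apply Rmult_le_compat_l; [lra |].
  rewrite <- exp_plus. apply exp_le_mono.
  assert (/ (4 * (INR j + 1)) <= / 4) by (apply Rinv_le_contravar; lra).
  unfold Rdiv. lra.
Qed.

Lemma walk1_abs (j : nat) (a : Z) : walk1 j (Z.abs a) = walk1 j a.
Proof.
  destruct (Z_le_gt_dec 0 a).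
  - rewrite Z.abs_eq by lia. reflexivity.
  - rewrite Z.abs_neq by lia. apply walk1_sym.
Qed.

Lemma walk1_step_lower (j a : nat) :
  walk1 j (Z.of_nat a + 2) * INR j >= walk1 j (Z.of_nat a) * (INR j - (2 * INR a + 2)).
Proof.
  pose proof (walk1_ratio j (Z.of_nat a)) as Hratio. rewrite <- INR_IZR_INZ in Hratio.
  pose proof (walk1_nonneg j (Z.of_nat a)). pose proof (walk1_nonneg j (Z.of_nat a + 2)).
  pose proof (pos_INR a). pose proof (pos_INR j).
  apply Rle_ge, Rmult_le_reg_r with (INR j + INR a + 2); [lra |]. nra.
Qed.

Lemma walk1_lower_nat (j rho t : nat) : (1 <= j)%nat ->
  walk1 j (Z.of_nat (rho + 2 * t))
  >= walk1 j (Z.of_nat rho) * (1 - INR (rho + 2 * t) ^ 2 / (2 * INR j)).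
Proof.
  intros Hj. apply le_INR in Hj. simpl in Hj.
  pose proof (walk1_nonneg j (Z.of_nat rho)) as Hq0.
  induction t as [|t IH].
  - rewrite Nat.add_0_r.
    assert (0 <= INR rho ^ 2 / (2 * INR j)) by (apply Rdiv_nonneg; nra).
    nra.
  - replace (rho + 2 * S t)%nat with ((rho + 2 * t) + 2)%nat by lia.
    set (a := (rho + 2 * t)%nat) in *.
    replace (Z.of_nat (a + 2)) with (Z.of_nat a + 2)%Z by lia.
    rewrite plus_INR.
    pose proof (pos_INR a) as HA.
    pose proof (walk1_nonneg j (Z.of_nat a)). pose proof (walk1_nonneg j (Z.of_nat a + 2)).
    set (X := INR a ^ 2 / (2 * INR j)). set (Y := (2 * INR a + 2) / INR j).
    assert (HX : 0 <= X) by (apply Rdiv_nonneg; nra).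
    assert (HY : 0 <= Y) by (apply Rdiv_nonneg; lra).
    assert (Hstep : walk1 j (Z.of_nat a + 2) >= walk1 j (Z.of_nat a) * (1 - Y)).
    { pose proof (walk1_step_lower j a) as Hs.
      apply Rle_ge, Rmult_le_reg_r with (INR j); [lra |].
      replace (walk1 j (Z.of_nat a) * (1 - Y) * INR j)
        with (walk1 j (Z.of_nat a) * (INR j - (2 * INR a + 2))) by (unfold Y; field; lra).
      lra. }
    replace ((INR a + INR 2) ^ 2 / (2 * INR j)) with (X + Y) by (unfold X, Y; simpl; field; lra).
    fold X in IH.
    set (q0 := walk1 j (Z.of_nat rho)) in *.
    destruct (Rle_lt_dec (1 - X - Y) 0) as [Hneg | Hpos].
    + assert (0 <= q0 * (X + Y - 1)) by (apply Rmult_le_pos; lra). lra.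
    + assert (walk1 j (Z.of_nat a) * (1 - Y) >= q0 * (1 - X) * (1 - Y))
        by (apply Rmult_ge_compat_r; lra).
      assert (0 <= q0 * (X * Y)) by (apply Rmult_le_pos; [lra | apply Rmult_le_pos; lra]).
      nra.
Qed.

Definition center_site (j : nat) : nat := if Nat.even j then 0%nat else 1%nat.

Definition center_value (j : nat) : R := walk1 j (Z.of_nat (center_site j)).

Lemma center_value_nonneg (j : nat) : 0 <= center_value j.
Proof. apply walk1_nonneg. Qed.

Lemma center_value_lower (j : nat) : 1 <= 4 * (center_value j ^ 2 * (2 * INR j + 1)).
Proof.
  unfold center_value, center_site.
  destruct (Nat.Even_or_Odd j) as [[m Hm]|[m Hm]]; subst j.
  - rewrite Nat.even_mul. simpl Nat.even. cbv iota. simpl Z.of_nat.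
    pose proof (walk1_return_bounds m) as [_ Hlo]. rewrite mult_INR. simpl (INR 2).
    pose proof (pos_INR m). assert (0 <= walk1 (2 * m) 0 ^ 2) by nra. nra.
  - rewrite Nat.even_add, Nat.even_mul. simpl Nat.even. cbv iota. simpl Z.of_nat.
    replace (2 * m + 1)%nat with (S (2 * m)) by lia. rewrite walk1_S. simpl Z.sub. simpl Z.add.
    pose proof (walk1_return_bounds m) as [_ Hlo]. rewrite S_INR, mult_INR. simpl (INR 2).
    pose proof (pos_INR m).
    pose proof (walk1_nonneg (2 * m) 0). pose proof (walk1_nonneg (2 * m) 2).
    assert (walk1 (2 * m) 0 ^ 2 <= 4 * ((walk1 (2 * m) 0 + walk1 (2 * m) 2) / 2) ^ 2) by nra.
    nra.
Qed.

Lemma center_site_offset (j : nat) (b : Z) :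
  Z.Even (Z.of_nat j + b) -> exists t : nat, Z.abs b = Z.of_nat (center_site j + 2 * t).
Proof.
  intros [w Hw]. unfold center_site.
  exists (Z.to_nat ((Z.abs b - Z.of_nat (center_site j)) / 2)). unfold center_site.
  destruct (Nat.Even_or_Odd j) as [[m Hm]|[m Hm]]; subst j.
  - rewrite Nat.even_mul. simpl. Z.div_mod_to_equations. lia.
  - rewrite Nat.even_add, Nat.even_mul. simpl. Z.div_mod_to_equations. lia.
Qed.

Lemma walk1_pair_lower (j : nat) (a : Z) : (1 <= j)%nat ->
  4 * IZR a ^ 2 <= INR j -> 4 * IZR (a + 1) ^ 2 <= INR j ->
  7 / 8 * center_value j <= walk1 j a + walk1 j (a + 1).
Proof.
  intros Hj Ha Ha1.
  assert (Hb : exists b, (b = a \/ b = a + 1)%Z /\ Z.Even (Z.of_nat j + b)).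
  { destruct (Z.Even_or_Odd (Z.of_nat j + a)) as [Hev | [w Hw]].
    - exists a. auto.
    - exists (a + 1)%Z. split; [auto | exists (w + 1)%Z; lia]. }
  destruct Hb as [b [Hba Hbe]].
  assert (Hqb : walk1 j b <= walk1 j a + walk1 j (a + 1)).
  { pose proof (walk1_nonneg j a). pose proof (walk1_nonneg j (a + 1)).
    destruct Hba; subst; lra. }
  assert (Hb2 : 4 * IZR b ^ 2 <= INR j) by (destruct Hba; subst; auto).
  eapply Rle_trans; [| exact Hqb].
  destruct (center_site_offset j b Hbe) as [t Ht].
  pose proof (walk1_lower_nat j (center_site j) t Hj) as Hlow.
  rewrite <- Ht, walk1_abs in Hlow. fold (center_value j) in Hlow.
  replace (INR (center_site j + 2 * t) ^ 2) with (IZR b ^ 2) in Hlow.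
  2: { rewrite INR_IZR_INZ, <- Ht, abs_IZR, <- !Rsqr_pow2. apply Rsqr_abs. }
  apply le_INR in Hj. simpl in Hj.
  assert (IZR b ^ 2 / (2 * INR j) <= 1 / 8).
  { apply Rmult_le_reg_r with (2 * INR j); [lra |]. unfold Rdiv.
    rewrite Rmult_assoc, Rinv_l by lra. lra. }
  pose proof (center_value_nonneg j). nra.
Qed.

Lemma sum_f_R0_ge_term (f : nat -> R) (N i : nat) :
  (forall l, 0 <= f l) -> (i <= N)%nat -> f i <= sum_f_R0 f N.
Proof.
  intros Hf. induction N as [|N IH]; intros Hi; simpl.
  - replace i with 0%nat by lia. lra.
  - pose proof (Hf (S N)). destruct (Nat.eq_dec i (S N)) as [-> | Hne].
    + pose proof (cond_pos_sum f N Hf). lra.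
    + pose proof (IH ltac:(lia)). lra.
Qed.

Lemma sum_f_R0_pairs (f : nat -> R) (r : nat) (L : R) : (forall l, 0 <= f l) ->
  (forall i, (i < r)%nat -> L <= f (2 * i + 1)%nat + f (2 * i + 2)%nat) ->
  INR r * L <= sum_f_R0 f (2 * r).
Proof.
  intros Hf. induction r as [|r IH]; intros Hpairs.
  - simpl. pose proof (Hf 0%nat). lra.
  - replace (2 * S r)%nat with (S (S (2 * r))) by lia.
    change (sum_f_R0 f (S (S (2 * r))))
      with (sum_f_R0 f (2 * r) + f (S (2 * r)) + f (S (S (2 * r)))).
    pose proof (IH ltac:(intros; apply Hpairs; lia)).
    pose proof (Hpairs r ltac:(lia)). rewrite S_INR.
    replace (S (2 * r)) with (2 * r + 1)%nat by lia.
    replace (S (2 * r + 1)) with (2 * r + 2)%nat by lia. lra.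
Qed.

Definition window (r j : nat) (c : Z) : R :=
  sum_f_R0 (fun i => walk1 j (c - Z.of_nat r + Z.of_nat i)%Z) (2 * r).

Lemma window_S (r j : nat) (c : Z) :
  window r (S j) c = (window r j (c - 1) + window r j (c + 1)) / 2.
Proof.
  unfold window, Rdiv. rewrite <- sum_plus, Rmult_comm, scal_sum.
  apply sum_eq. intros i _. rewrite walk1_S. unfold Rdiv.
  f_equal. f_equal; f_equal; lia.
Qed.

Lemma window_nonneg (r j : nat) (c : Z) : 0 <= window r j c.
Proof. apply cond_pos_sum. intros. apply walk1_nonneg. Qed.

Lemma window_start (r : nat) (c : Z) : (Z.abs c <= Z.of_nat r)%Z -> 1 <= window r 0 c.
Proof.
  intros Hc. unfold window.
  eapply Rle_trans; [| apply sum_f_R0_ge_term with (i := Z.to_nat (Z.of_nat r - c))].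
  - simpl. destruct (Z.eq_dec _ 0); [lra | lia].
  - intros. apply walk1_nonneg.
  - lia.
Qed.

Lemma window_gauss (r j : nat) (c : Z) (D : R) :
  (forall i, (i <= 2 * r)%nat -> D <= IZR (c - Z.of_nat r + Z.of_nat i) ^ 2) ->
  window r j c
  <= central_mass j * exp (1 / 4) * exp (- D / (4 * (INR j + 1))) * INR (S (2 * r)).
Proof.
  intros Hfar. unfold window. rewrite <- sum_cte. apply sum_Rle. intros i Hi.
  eapply Rle_trans; [apply walk1_gauss |]. pose proof (pos_INR j).
  apply Rmult_le_compat_l.
  - pose proof (central_mass_nonneg j). pose proof (exp_pos (1 / 4)). nra.
  - apply exp_le_mono. unfold Rdiv. rewrite <- !Ropp_mult_distr_l. apply Ropp_le_contravar.
    apply Rmult_le_compat_r; [left; apply Rinv_0_lt_compat; lra | auto].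
Qed.

Lemma window_bounded (r j : nat) (c : Z) :
  window r j c <= central_mass j * exp (1 / 4) * INR (S (2 * r)).
Proof.
  eapply Rle_trans; [apply window_gauss with (D := 0); intros; nra |].
  pose proof (pos_INR j).
  replace (- 0 / (4 * (INR j + 1))) with 0 by (field; lra). rewrite exp_0. lra.
Qed.

Lemma window_lower (r j : nat) (c : Z) : (1 <= r)%nat -> (Z.abs c <= Z.of_nat r)%Z ->
  (16 * (r + 1) ^ 2 <= j)%nat -> INR r * (7 / 8 * center_value j) <= window r j c.
Proof.
  intros Hr Hc Hj. assert (Hj1 : (1 <= j)%nat) by (cbn [Nat.pow] in Hj; nia).
  apply le_INR in Hj. rewrite mult_INR, pow_INR, plus_INR in Hj. simpl (INR 16) in Hj.
  simpl (INR 1) in Hj. pose proof (pos_INR r).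
  assert (Hsite : forall i, (i <= 2 * r)%nat ->
            4 * IZR (c - Z.of_nat r + Z.of_nat i) ^ 2 <= INR j).
  { intros i Hi. set (s := (c - Z.of_nat r + Z.of_nat i)%Z).
    assert (Hs : (- (2 * Z.of_nat r) <= s <= 2 * Z.of_nat r)%Z) by (unfold s; lia).
    destruct Hs as [Hs1 Hs2]. apply IZR_le in Hs1. apply IZR_le in Hs2.
    rewrite opp_IZR, mult_IZR, <- INR_IZR_INZ in Hs1. rewrite mult_IZR, <- INR_IZR_INZ in Hs2.
    simpl (IZR 2) in Hs1, Hs2. nra. }
  unfold window. apply sum_f_R0_pairs; [intros; apply walk1_nonneg |].
  intros i Hi. replace (c - Z.of_nat r + Z.of_nat (2 * i + 2))%Z
    with ((c - Z.of_nat r + Z.of_nat (2 * i + 1)) + 1)%Z by lia.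
  apply walk1_pair_lower; [exact Hj1 | apply Hsite; lia |].
  replace (c - Z.of_nat r + Z.of_nat (2 * i + 1) + 1)%Z
    with (c - Z.of_nat r + Z.of_nat (2 * i + 2))%Z by lia.
  apply Hsite. lia.
Qed.

(* A step of the planar walk
   changes each of u, v by +-1 and the four steps realise the four sign
   combinations, so u and v perform independent one-dimensional walks. *)
Definition rot_u (p : Z * Z) : Z := (fst p + snd p)%Z.
Definition rot_v (p : Z * Z) : Z := (fst p - snd p)%Z.

(* box_occ r z j p: probability that the planar walk started at p lies at
   time j in the rotated box {|u - u(z)| <= r, |v - v(z)| <= r}. *)
Definition box_occ (r : nat) (z : Z * Z) (j : nat) (p : Z * Z) : R :=
  window r j (rot_u z - rot_u p) * window r j (rot_v z - rot_v p).

Lemma box_occ_nonneg (r : nat) (z : Z * Z) (j : nat) (p : Z * Z) : 0 <= box_occ r z j p.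
Proof. apply Rmult_le_pos; apply window_nonneg. Qed.

(* The Markov property in rotated coordinates: one step of the planar walk
   is one step of each coordinate walk. *)
Lemma box_occ_S (r : nat) (z : Z * Z) (j : nat) (p : Z * Z) :
  box_occ r z (S j) p = nbr_sum (box_occ r z j) p / 4.
Proof.
  destruct p as [p1 p2], z as [z1 z2].
  unfold nbr_sum, box_occ, rot_u, rot_v, addZ2. rewrite !window_S. simpl.
  replace (z1 + z2 - (p1 + 1 + (p2 + 0)))%Z with (z1 + z2 - (p1 + p2) - 1)%Z by lia.
  replace (z1 - z2 - (p1 + 1 - (p2 + 0)))%Z with (z1 - z2 - (p1 - p2) - 1)%Z by lia.
  replace (z1 + z2 - (p1 + -1 + (p2 + 0)))%Z with (z1 + z2 - (p1 + p2) + 1)%Z by lia.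
  replace (z1 - z2 - (p1 + -1 - (p2 + 0)))%Z with (z1 - z2 - (p1 - p2) + 1)%Z by lia.
  replace (z1 + z2 - (p1 + 0 + (p2 + 1)))%Z with (z1 + z2 - (p1 + p2) - 1)%Z by lia.
  replace (z1 - z2 - (p1 + 0 - (p2 + 1)))%Z with (z1 - z2 - (p1 - p2) + 1)%Z by lia.
  replace (z1 + z2 - (p1 + 0 + (p2 + -1)))%Z with (z1 + z2 - (p1 + p2) + 1)%Z by lia.
  replace (z1 - z2 - (p1 + 0 - (p2 + -1)))%Z with (z1 - z2 - (p1 - p2) - 1)%Z by lia.
  field.
Qed.

Definition green (r : nat) (z : Z * Z) (m : nat) (p : Z * Z) : R :=
  sum_f_R0 (fun j => box_occ r z j p) m.

Lemma green_nonneg (r : nat) (z : Z * Z) (m : nat) (p : Z * Z) : 0 <= green r z m p.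
Proof. apply cond_pos_sum. intros. apply box_occ_nonneg. Qed.

Lemma green_mono (r : nat) (z : Z * Z) (m d : nat) (p : Z * Z) :
  green r z m p <= green r z (d + m) p.
Proof.
  induction d as [|d IH]; [simpl; lra |].
  unfold green in *. rewrite Nat.add_succ_l. simpl.
  pose proof (box_occ_nonneg r z (S (d + m)) p). lra.
Qed.

Lemma green_S (r : nat) (z : Z * Z) (m : nat) (p : Z * Z) :
  green r z (S m) p = box_occ r z 0 p + nbr_sum (green r z m) p / 4.
Proof.
  unfold green. rewrite decomp_sum by lia. simpl pred. f_equal.
  rewrite (sum_eq _ (fun j => nbr_sum (box_occ r z j) p / 4)) by (intros; apply box_occ_S).
  unfold nbr_sum, Rdiv. rewrite <- !sum_plus, Rmult_comm, scal_sum. reflexivity.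
Qed.

Lemma hit_prob_green (r : nat) (z : Z * Z) (k n : nat) (M : R) : 0 <= M ->
  (forall x, in_square z k x = true -> M <= green r z n x) ->
  forall m p, hit_prob_from z k m p * M <= green r z (m + n) p.
Proof.
  intros HM Hsq m. induction m as [|m IH]; intros p;
    destruct (in_square z k p) eqn:Hin.
  - rewrite hit_prob_from_inside, Rmult_1_l by exact Hin. apply Hsq, Hin.
  - unfold hit_prob_from. rewrite hit_count_O, Hin. simpl.
    replace (0 / 1 * M) with 0 by field. apply green_nonneg.
  - rewrite hit_prob_from_inside, Rmult_1_l by exact Hin.
    eapply Rle_trans; [apply Hsq, Hin | apply green_mono].
  - rewrite hit_prob_from_step by exact Hin. simpl Nat.add. rewrite green_S.
    pose proof (box_occ_nonneg r z 0 p). unfold nbr_sum in *.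
    pose proof (IH (addZ2 p (step East))). pose proof (IH (addZ2 p (step West))).
    pose proof (IH (addZ2 p (step North))). pose proof (IH (addZ2 p (step South))).
    lra.
Qed.




Lemma harmonic_ln (J : nat) : (1 <= J)%nat -> forall n : nat,
  ln (INR n + 1) - ln (INR J) <= sum_f_R0 (fun j => if le_dec J j then / INR j else 0) n.
Proof.
  intros HJ. pose proof (le_INR _ _ HJ) as HJr. simpl in HJr.
  assert (HlnJ : 0 <= ln (INR J)) by (rewrite <- ln_1; apply ln_le; lra).
  assert (Hterms : forall j, 0 <= (if le_dec J j then / INR j else 0)).
  { intros j. destruct (le_dec J j); [left; apply Rinv_0_lt_compat, lt_0_INR; lia | lra]. }
  induction n as [|n IH].
  - simpl. destruct (le_dec J 0); [lia |]. rewrite Rplus_0_l, ln_1. lra.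
  - rewrite tech5, S_INR. pose proof (pos_INR n).
    destruct (le_dec J (S n)) as [HJn | HJn].
    + assert (ln (INR n + 1 + 1) - ln (INR n + 1) <= / (INR n + 1)).
      { assert (Hinv : 0 < / (INR n + 1)) by (apply Rinv_0_lt_compat; lra).
        replace (INR n + 1 + 1) with ((INR n + 1) * (1 + / (INR n + 1))) by (field; lra).
        rewrite ln_mult by lra. pose proof (ln_1p_le _ Hinv). lra. }
      lra.
    + assert (HnJ : INR n + 1 + 1 <= INR J).
      { assert (HSS : (S (S n) <= J)%nat) by lia. apply le_INR in HSS. rewrite !S_INR in HSS. lra. }
      pose proof (ln_le (INR n + 1 + 1) (INR J) ltac:(lra) HnJ). pose proof (cond_pos_sum _ n Hterms). lra.
Qed.

Lemma heat_tail_bound (D n y : R) : 1 <= n -> 25 * n <= D -> 1 <= y -> y <= 3 * n ->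
  / y * exp (- D / (100 * y)) <= 8 / n * exp (- D / (600 * n)).
Proof.
  intros Hn HD Hy1 Hy.
  replace (- D / (100 * y)) with (- (D / (200 * y)) + - D / (200 * y)) by (field; lra).
  rewrite exp_plus.
  assert (Hslow : exp (- D / (200 * y)) <= exp (- D / (600 * n))).
  { apply exp_le_mono. unfold Rdiv. rewrite <- !Ropp_mult_distr_l. apply Ropp_le_contravar.
    apply Rmult_le_compat_l; [lra | apply Rinv_le_contravar; lra]. }
  assert (Hfast : exp (- (D / (200 * y))) <= / (D / (200 * y)))
    by (apply exp_neg_le_inv, Rdiv_lt_0_compat; lra).
  assert (Hprefactor : / y * / (D / (200 * y)) <= 8 / n).
  { replace (/ y * / (D / (200 * y))) with (200 / D) by (field; lra).
    apply Rmult_le_reg_r with (D * n); [nra |]. field_simplify; lra. }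
  pose proof (exp_pos (- (D / (200 * y)))). pose proof (exp_pos (- D / (200 * y))).
  assert (0 < / y) by (apply Rinv_0_lt_compat; lra).
  apply Rle_trans with (/ y * / (D / (200 * y)) * exp (- D / (600 * n))).
  - rewrite Rmult_assoc. apply Rmult_le_compat_l; [lra |].
    apply Rmult_le_compat; lra.
  - apply Rmult_le_compat_r; [left; apply exp_pos | exact Hprefactor].
Qed.

Lemma square_in_box (z : Z * Z) (k : nat) (x : Z * Z) : in_square z k x = true ->
  (Z.abs (rot_u z - rot_u x) <= Z.of_nat (2 * k + 1))%Z
  /\ (Z.abs (rot_v z - rot_v x) <= Z.of_nat (2 * k + 1))%Z.
Proof.
  unfold in_square, rot_u, rot_v. intros Hin. apply andb_prop in Hin as [Hx Hy].
  apply Z.leb_le in Hx. apply Z.leb_le in Hy. lia.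
Qed.

Lemma green_start (r : nat) (z : Z * Z) (n : nat) (p : Z * Z) :
  (Z.abs (rot_u z - rot_u p) <= Z.of_nat r)%Z -> (Z.abs (rot_v z - rot_v p) <= Z.of_nat r)%Z ->
  1 <= green r z n p.
Proof.
  intros Hu Hv. unfold green.
  eapply Rle_trans; [| apply sum_f_R0_ge_term with (i := 0%nat); [intros; apply box_occ_nonneg | lia]].
  unfold box_occ. pose proof (window_start r _ Hu). pose proof (window_start r _ Hv). nra.
Qed.

Lemma box_occ_lower (r : nat) (z : Z * Z) (j : nat) (p : Z * Z) : (1 <= r)%nat ->
  (Z.abs (rot_u z - rot_u p) <= Z.of_nat r)%Z -> (Z.abs (rot_v z - rot_v p) <= Z.of_nat r)%Z ->
  (16 * (r + 1) ^ 2 <= j)%nat -> INR r ^ 2 / 16 * / INR j <= box_occ r z j p.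
Proof.
  intros Hr Hu Hv Hj. unfold box_occ.
  pose proof (window_lower r j _ Hr Hu Hj) as Hwu.
  pose proof (window_lower r j _ Hr Hv Hj) as Hwv.
  assert (HJ : 1 <= INR j) by (apply (le_INR 1); cbn [Nat.pow] in Hj; nia).
  pose proof (center_value_lower j). pose proof (center_value_nonneg j). pose proof (pos_INR r).
  set (l := center_value j) in *. set (a := INR r) in *. set (J := INR j) in *.
  assert (Hprod : (a * (7 / 8 * l)) ^ 2
                  <= window r j (rot_u z - rot_u p) * window r j (rot_v z - rot_v p)).
  { rewrite <- Rsqr_pow2. unfold Rsqr. apply Rmult_le_compat; nra. }
  apply Rmult_le_reg_r with (16 * J); [lra |].
  replace (a ^ 2 / 16 * / J * (16 * J)) with (a ^ 2) by (field; lra).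
  assert (12 * J * l ^ 2 >= 1) by nra. nra.
Qed.

Lemma green_log_lower (r : nat) (z : Z * Z) (n : nat) (p : Z * Z) : (1 <= r)%nat ->
  (Z.abs (rot_u z - rot_u p) <= Z.of_nat r)%Z -> (Z.abs (rot_v z - rot_v p) <= Z.of_nat r)%Z ->
  INR r ^ 2 / 16 * (ln (INR n + 1) - ln (INR (16 * (r + 1) ^ 2))) <= green r z n p.
Proof.
  intros Hr Hu Hv.
  assert (HJ : (1 <= 16 * (r + 1) ^ 2)%nat) by (cbn [Nat.pow]; nia).
  eapply Rle_trans.
  { apply Rmult_le_compat_l; [| apply (harmonic_ln _ HJ n)].
    apply Rdiv_nonneg; [apply pow_le, pos_INR | lra]. }
  rewrite scal_sum. unfold green. apply sum_Rle. intros j _.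
  destruct (le_dec (16 * (r + 1) ^ 2) j) as [Hj | Hj].
  - rewrite Rmult_comm. apply box_occ_lower; assumption.
  - rewrite Rmult_0_l. apply box_occ_nonneg.
Qed.

Lemma offset_far (C Rr I D : R) : D <= C ^ 2 -> 25 * Rr ^ 2 <= 16 * C ^ 2 -> 0 <= Rr ->
  0 <= I <= 2 * Rr -> D / 25 <= (C - Rr + I) ^ 2.
Proof.
  intros HD HC HR HI. destruct (Rle_lt_dec 0 C).
  - assert (4 * C >= 5 * Rr) by nra. assert (C - Rr + I >= C / 5) by lra. nra.
  - assert (4 * C <= - 5 * Rr) by nra. assert (C - Rr + I <= C / 5) by lra. nra.
Qed.

Lemma window_far (r j : nat) (c : Z) (D : R) :
  D <= IZR c ^ 2 -> 25 * INR r ^ 2 <= 16 * IZR c ^ 2 ->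
  window r j c
  <= central_mass j * exp (1 / 4) * exp (- D / (100 * (INR j + 1))) * INR (S (2 * r)).
Proof.
  intros HD Hc. pose proof (pos_INR j).
  replace (- D / (100 * (INR j + 1))) with (- (D / 25) / (4 * (INR j + 1))) by (field; lra).
  apply window_gauss. intros i Hi.
  rewrite plus_IZR, minus_IZR, <- !INR_IZR_INZ.
  apply offset_far; [exact HD | exact Hc | apply pos_INR |].
  apply le_INR in Hi. rewrite mult_INR in Hi. simpl (INR 2) in Hi.
  split; [apply pos_INR | exact Hi].
Qed.

Lemma window_pair_far (r j n : nat) (c1 c2 : Z) (D : R) :
  (1 <= n)%nat -> (j <= n + n)%nat -> 25 * INR n <= D -> D <= IZR c1 ^ 2 ->
  INR r ^ 2 <= 9 * INR n ->
  window r j c1 * window r j c2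
  <= 16 * exp (1 / 2) * INR (S (2 * r)) ^ 2 / INR n * exp (- D / (600 * INR n)).
Proof.
  intros Hn Hj HD Hc Hr.
  apply le_INR in Hn. apply le_INR in Hj. rewrite plus_INR in Hj. simpl in Hn.
  pose proof (pos_INR j).
  pose proof (window_far r j c1 D Hc ltac:(lra)) as Hw1.
  pose proof (window_bounded r j c2) as Hw2.
  pose proof (window_nonneg r j c1). pose proof (window_nonneg r j c2).
  pose proof (heat_tail_bound D (INR n) (INR j + 1) Hn HD ltac:(lra) ltac:(lra)) as Htail.
  set (G := central_mass j * exp (1 / 4)) in *.
  assert (HG : G ^ 2 * (INR j + 1) <= 2 * exp (1 / 2)).
  { unfold G. rewrite Rpow_mult_distr.
    replace (exp (1 / 4) ^ 2) with (exp (1 / 2)) by (simpl; rewrite Rmult_1_r, <- exp_plus; f_equal; lra).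
    pose proof (central_mass_bound j). pose proof (exp_pos (1 / 2)). nra. }
  assert (HG0 : 0 <= G) by (unfold G; pose proof (central_mass_nonneg j); pose proof (exp_pos (1 / 4)); nra).
  set (E := exp (- D / (100 * (INR j + 1)))) in *. assert (0 < E) by apply exp_pos.
  set (W := INR (S (2 * r))) in *. assert (0 <= W) by apply pos_INR.
  apply Rle_trans with (G ^ 2 * (INR j + 1) * W ^ 2 * (/ (INR j + 1) * E)).
  - replace (G ^ 2 * (INR j + 1) * W ^ 2 * (/ (INR j + 1) * E))
      with ((G * E * W) * (G * W)) by (field; lra).
    apply Rmult_le_compat; assumption.
  - replace (16 * exp (1 / 2) * W ^ 2 / INR n * exp (- D / (600 * INR n)))
      with (2 * exp (1 / 2) * W ^ 2 * (8 / INR n * exp (- D / (600 * INR n)))) by (field; lra).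
    assert (0 <= / (INR j + 1) * E) by (apply Rmult_le_pos; [left; apply Rinv_0_lt_compat |]; lra).
    apply Rmult_le_compat; [nra | assumption | | exact Htail].
    apply Rmult_le_compat_r; [nra | exact HG].
Qed.

Lemma green_far_upper (r : nat) (z : Z * Z) (n : nat) (D : R) :
  (1 <= n)%nat -> 25 * INR n <= D ->
  (D <= IZR (rot_u z) ^ 2 \/ D <= IZR (rot_v z) ^ 2) -> INR r ^ 2 <= 9 * INR n ->
  green r z (n + n) (0%Z, 0%Z)
  <= 48 * exp (1 / 2) * INR (S (2 * r)) ^ 2 * exp (- D / (600 * INR n)).
Proof.
  intros Hn HD Hfar Hr. unfold green, box_occ.
  change (rot_u (0%Z, 0%Z)) with 0%Z. change (rot_v (0%Z, 0%Z)) with 0%Z.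
  rewrite !Z.sub_0_r.
  set (B := 16 * exp (1 / 2) * INR (S (2 * r)) ^ 2 / INR n * exp (- D / (600 * INR n))).
  apply Rle_trans with (B * INR (S (n + n))).
  - rewrite <- sum_cte. apply sum_Rle. intros j Hj. destruct Hfar as [Hu | Hv].
    + apply window_pair_far; assumption.
    + rewrite Rmult_comm. apply window_pair_far; assumption.
  - apply le_INR in Hn. simpl in Hn. rewrite S_INR, plus_INR.
    pose proof (exp_pos (1 / 2)). pose proof (exp_pos (- D / (600 * INR n))).
    pose proof (pos_INR (S (2 * r))).
    assert (HB : B * (INR n + INR n + 1) <= B * (3 * INR n)).
    { apply Rmult_le_compat_l; [unfold B; apply Rmult_le_pos; [apply Rdiv_nonneg |]; nra | lra]. }
    eapply Rle_trans; [exact HB |]. right. unfold B. field. lra.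
Qed.

Lemma square_side_bounds (n k : nat) : (1 <= n)%nat -> INR k <= Rpower (INR n) (1 / 4) ->
  INR (2 * k + 1) ^ 2 <= 9 * INR n
  /\ ln (INR (16 * (2 * k + 1 + 1) ^ 2)) <= ln 256 + ln (INR n) / 2.
Proof.
  intros Hn Hk. apply le_INR in Hn. simpl in Hn.
  set (t := Rpower (INR n) (1 / 4)) in *.
  assert (Ht2 : t ^ 2 = exp (ln (INR n) / 2)).
  { unfold t, Rpower. simpl. rewrite Rmult_1_r, <- exp_plus. f_equal. lra. }
  assert (Ht4 : t ^ 2 * t ^ 2 = INR n).
  { rewrite Ht2, <- exp_plus. replace (ln (INR n) / 2 + ln (INR n) / 2) with (ln (INR n)) by lra.
    apply exp_ln. lra. }
  assert (Ht1 : 1 <= t).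
  { unfold t, Rpower. pose proof (exp_ineq1_le (1 / 4 * ln (INR n))).
    assert (0 <= ln (INR n)) by (rewrite <- ln_1; apply ln_le; lra). nra. }
  pose proof (pos_INR k).
  rewrite mult_INR, pow_INR, !plus_INR, mult_INR.
  replace (INR 1) with 1 by reflexivity. replace (INR 2) with 2 by (simpl; ring).
  replace (INR 16) with 16 by (simpl; ring).
  assert (Hkt : INR k <= t ^ 2) by nra.
  assert (Htn : t ^ 2 <= INR n) by nra.
  split.
  - assert (INR k ^ 2 <= t ^ 2) by nra. nra.
  - apply Rle_trans with (ln (256 * t ^ 2)).
    + apply ln_le; [nra |]. assert (INR k + 1 <= 2 * t) by lra. nra.
    + rewrite ln_mult, Ht2, ln_exp by nra. lra.
Qed.

(* The plane point z is at least as far from the origin in one of the two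
   rotated coordinates, since u^2 + v^2 = 2 |z|^2. *)
Lemma rotated_coordinate_far (z : Z * Z) :
  normZ2 z ^ 2 <= IZR (rot_u z) ^ 2 \/ normZ2 z ^ 2 <= IZR (rot_v z) ^ 2.
Proof.
  assert (Hsq : normZ2 z ^ 2 = IZR (fst z) ^ 2 + IZR (snd z) ^ 2).
  { unfold normZ2. rewrite <- Rsqr_pow2. apply Rsqr_sqrt. nra. }
  rewrite Hsq. unfold rot_u, rot_v. rewrite plus_IZR, minus_IZR.
  destruct (Rle_lt_dec (IZR (fst z) ^ 2 + IZR (snd z) ^ 2) (IZR (fst z) ^ 2 + IZR (snd z) ^ 2 + 2 * IZR (fst z) * IZR (snd z)));
    [left | right]; nra.
Qed.

Lemma far_norm_sq (n : nat) (z : Z * Z) : 0 <= INR n ->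
  normZ2 z >= 5 * sqrt (INR n) -> 25 * INR n <= normZ2 z ^ 2.
Proof.
  intros Hn Hz. pose proof (sqrt_pos (INR n)). pose proof (sqrt_sqrt (INR n) Hn). nra.
Qed.

(* Threshold separating small n (where one visit is enough) from large n
   (where the logarithmic growth of the Green's function takes over). *)
Definition log_threshold : R := 4 * ln 256.

Definition green_const : R := / (64 * exp log_threshold * log_threshold).

Lemma log_threshold_gt_2 : 2 < log_threshold.
Proof.
  unfold log_threshold. replace 256 with (2 ^ 8) by (simpl; ring). rewrite ln_pow by lra.
  pose proof ln_lt_2. simpl (INR 8). lra.
Qed.

Lemma green_const_pos : 0 < green_const.
Proof.
  unfold green_const. pose proof log_threshold_gt_2. pose proof (exp_pos log_threshold).
  apply Rinv_0_lt_compat. nra.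
Qed.

Lemma green_square_lower (n k : nat) (z x : Z * Z) : (2 <= n)%nat ->
  INR (2 * k + 1) ^ 2 <= 9 * INR n ->
  ln (INR (16 * (2 * k + 1 + 1) ^ 2)) <= ln 256 + ln (INR n) / 2 ->
  in_square z k x = true ->
  green_const * INR (2 * k + 1) ^ 2 * ln (INR n) <= green (2 * k + 1) z n x.
Proof.
  intros Hn Hr HJ Hx. destruct (square_in_box z k x Hx) as [Hu Hv].
  apply le_INR in Hn. simpl in Hn.
  pose proof log_threshold_gt_2. pose proof (exp_pos log_threshold).
  assert (Hln : 0 < ln (INR n)) by (rewrite <- ln_1; apply ln_increasing; lra).
  set (r := (2 * k + 1)%nat) in *. pose proof (pos_INR r).
  destruct (Rle_lt_dec log_threshold (ln (INR n))) as [Hlarge | Hsmall].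
  - eapply Rle_trans; [| apply green_log_lower; [lia | exact Hu | exact Hv]].
    assert (Hc : green_const <= / 64).
    { unfold green_const. apply Rinv_le_contravar; [lra |].
      pose proof (exp_ineq1_le log_threshold). nra. }
    assert (Hgrow : ln (INR n) / 4 <= ln (INR n + 1) - ln (INR (16 * (r + 1) ^ 2))).
    { pose proof (ln_le (INR n) (INR n + 1) ltac:(lra) ltac:(lra)).
      unfold log_threshold in Hlarge. lra. }
    apply Rle_trans with (/ 64 * (INR r ^ 2 * ln (INR n))).
    + rewrite Rmult_assoc. apply Rmult_le_compat_r; [nra | exact Hc].
    + replace (/ 64 * (INR r ^ 2 * ln (INR n))) with (INR r ^ 2 / 16 * (ln (INR n) / 4)) by field.
      apply Rmult_le_compat_l; [nra | exact Hgrow].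
  - eapply Rle_trans; [| apply green_start; assumption].
    assert (HnA : INR n <= exp log_threshold).
    { rewrite <- (exp_ln (INR n)) by lra. left. apply exp_increasing, Hsmall. }
    unfold green_const. apply Rmult_le_reg_r with (64 * exp log_threshold * log_threshold); [nra |].
    field_simplify; nra.
Qed.

Theorem mainTheorem10 :
  exists c C : R, 0 < c /\ 0 < C /\
    forall (n k : nat) (z : Z * Z),
      (2 <= n)%nat ->
      INR k <= Rpower (INR n) (1 / 4) ->
      normZ2 z >= 5 * sqrt (INR n) ->
      hit_prob n z k <= C / log2 (INR n) * exp (- c * (normZ2 z ^ 2 / INR n)).
Proof.
  pose proof green_const_pos as Hmu. pose proof ln_lt_2. pose proof (exp_pos (1 / 2)).
  exists (1 / 600), (432 * exp (1 / 2) / (green_const * ln 2)).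
  split; [lra | split; [apply Rdiv_lt_0_compat; nra |]].
  intros n k z Hn Hk Hz.
  destruct (square_side_bounds n k ltac:(lia) Hk) as [Hr HJ].
  assert (HnR : 2 <= INR n) by (apply (le_INR 2); exact Hn).
  assert (Hln : 0 < ln (INR n)) by (rewrite <- ln_1; apply ln_increasing; lra).
  pose proof (far_norm_sq n z ltac:(lra) Hz) as HD.
  set (r := (2 * k + 1)%nat) in *.
  set (M := green_const * INR r ^ 2 * ln (INR n)).
  assert (HM : 0 < M).
  { assert (1 <= INR r) by (apply (le_INR 1); lia). unfold M.
    apply Rmult_lt_0_compat; [apply Rmult_lt_0_compat; [exact Hmu | apply pow_lt; lra] | exact Hln]. }
  pose proof (hit_prob_green r z k n M ltac:(lra)
                (fun x Hx => green_square_lower n k z x Hn Hr HJ Hx) n (0%Z, 0%Z)) as Hhit.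
  pose proof (green_far_upper r z n _ ltac:(lia) HD (rotated_coordinate_far z) ltac:(lra)) as Hfar.
  change (hit_prob n z k) with (hit_prob_from z k n (0%Z, 0%Z)).
  set (E := exp (- (1 / 600) * (normZ2 z ^ 2 / INR n))).
  replace (exp (- normZ2 z ^ 2 / (600 * INR n))) with E in Hfar by (unfold E; f_equal; field; lra).
  assert (HW : INR (S (2 * r)) ^ 2 <= 9 * INR r ^ 2).
  { rewrite S_INR, mult_INR. assert (1 <= INR r) by (apply (le_INR 1); lia). simpl (INR 2). nra. }
  assert (HE : 0 < E) by apply exp_pos.
  apply Rmult_le_reg_r with M; [exact HM |].
  unfold log2. replace (432 * exp (1 / 2) / (green_const * ln 2) / (ln (INR n) / ln 2) * E * M)
    with (432 * exp (1 / 2) * INR r ^ 2 * E) by (unfold M; field; lra).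
  eapply Rle_trans; [exact Hhit | eapply Rle_trans; [exact Hfar |]].
  replace (432 * exp (1 / 2) * INR r ^ 2 * E) with (48 * exp (1 / 2) * (9 * INR r ^ 2) * E) by ring.
  apply Rmult_le_compat_r; [lra |]. apply Rmult_le_compat_l; [lra | exact HW].
Qed.
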